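(* Let $(X,\kappa)$ be a finite digital image and $f:X\to X$ a continuous self-map with $L(f)\neq 0$. Then there is a simplex $\sigma\subseteq X$ (a nonempty set of pairwise adjacent points) with $f(\sigma)=\sigma$.
   Context: A digital image is a pair $(X,\kappa)$ where $X$ is a set and $\kappa$ is a symmetric irreflexive relation on $X$ (the adjacency). Write $x\leftrightarrow y$ if adjacent, $x\Leftrightarrow y$ if adjacent or equal. A map $f$ is continuous if $x\leftrightarrow y$ implies $f(x)\Leftrightarrow f(y)$. Simplicial homology: a $q$-simplex of $X$ is a set of $q+1$ pairwise adjacent points. $C_q(X)$ is the free abelian group generated by ordered $q$-simplices $\langle x_0,\dots,x_q\rangle$ modulo $\langle x_{\rho(0)},\dots,x_{\rho(q)}\rangle=\operatorname{sgn}(\rho)\langle x_0,\dots,x_q\rangle$, with boundary $\partial\langle x_0,\dots,x_q\rangle=\sum_{i=0}^q(-1)^i\langle x_0,\dots,\widehat{x_i},\dots,x_q\rangle$; $H_q(X)$ is its homology. For continuous $f$, $f_q\langle p_0,\dots,p_q\rangle=\langle f(p_0),\dots,f(p_q)\rangle$ (interpreted as $0$ if the image has fewer than $q+1$ points); this is a chain map inducing $f_{*,q}$ on $H_q$. The simplicial Lefschetz number of a self-map $f$ of a finite image is $L(f)=\sum_{q\ge0}(-1)^q\operatorname{tr}(f_{*,q})$, traces taken on $H_q(X)\otimes\mathbb Q$. *)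

From HB Require Import structures.
From mathcomp Require Import all_boot all_order all_algebra all_fingroup.
Set Implicit Arguments. Unset Strict Implicit. Unset Printing Implicit Defensive.
Import GRing.Theory Num.Theory.
Local Open Scope ring_scope.

(* A digital image is (T, e) with T : finType and e : rel T symmetric and
   irreflexive.  Chains are taken with rational coefficients. *)

Section DigitalHomology.
Variables (T : finType) (e : rel T).

Definition simplex (S : {set T}) : bool :=
  (S != set0) && [forall x in S, forall y in S, (x != y) ==> e x y].

Definition qsimp (q : nat) : {set {set T}} :=
  [set S : {set T} | simplex S && (#|S| == q.+1)].

Definition nq (q : nat) : nat := #|qsimp q|.

Definition simp (q : nat) (i : 'I_(nq q)) : {set T} := enum_val i.

(* the ordered simplex <t_0,...,t_q> as an element of C_q(X;Q), expressed in
   the basis of canonically oriented simplices <enum S> (points listed in the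
   enumeration order of T):  <t> = sgn(rho) <enum S> when t = (enum S) o rho,
   and <t> = 0 when t is not injective (fewer than q+1 points). *)
Definition ochain (q : nat) (t : 'I_q.+1 -> T) : 'rV[rat]_(nq q) :=
  \row_(i < nq q)
    \sum_(r : 'S_q.+1 | [forall k, t k == nth (t k) (enum (simp i)) (r k)])
      (-1) ^+ (odd_perm r).

Variable x0 : T. (* default point, only used for nth *)

Definition can (q : nat) (i : 'I_(nq q)) : 'I_q.+1 -> T :=
  fun k => nth x0 (enum (simp i)) k.

(* boundary  d_{q+1} : C_{q+1} -> C_q  (acting on row vectors) *)
Definition bd (q : nat) : 'M[rat]_(nq q.+1, nq q) :=
  \matrix_(i < nq q.+1)
    (\sum_(k < q.+2) (-1) ^+ k *: ochain (fun j : 'I_q.+1 => can i (lift k j))).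

Definition chmx (f : T -> T) (q : nat) : 'M[rat]_(nq q) :=
  \matrix_(i < nq q) ochain (fun k => f (can i k)).

End DigitalHomology.

(* Trace of the map induced by F : C -> C on H = ker Dq / im Dq1, where
   Dq : C -> C' is the outgoing boundary and Dq1 : C'' -> C the incoming one.
   H is identified with a complement W of B = im Dq1 in Z = ker Dq; the induced
   map sends w in W to the W-component (along B) of wF. *)
Definition homtr (n m p : nat) (Dq : 'M[rat]_(n, m)) (Dq1 : 'M[rat]_(p, n))
    (F : 'M[rat]_n) : rat :=
  let Z := kermx Dq in
  let B := (<<Dq1>>)%MS in
  let W := (Z :\: B)%MS in
  let Wb := row_base W in
  \tr (Wb *m F *m proj_mx W B *m pinvmx Wb).

Definition htrace (T : finType) (e : rel T) (x0 : T) (f : T -> T) (q : nat)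
  : rat :=
  match q with
  | 0 => homtr (0 : 'M[rat]_(nq e 0, 0)) (bd e x0 0) (chmx e x0 f 0)
  | q'.+1 => homtr (bd e x0 q') (bd e x0 q'.+1) (chmx e x0 f q'.+1)
  end.

(* Simplicial Lefschetz number; H_q = 0 for q >= #|T| (no q-simplices),
   and the empty image has L = 0. *)
Definition lefschetz (T : finType) (e : rel T) (f : T -> T) : rat :=
  match [pick x : T] with
  | Some x0 => \sum_(q < #|T|.+1) (-1) ^+ q * htrace e x0 f q
  | None => 0
  end.

Definition dcontinuous (T : finType) (e : rel T) (f : T -> T) : Prop :=
  forall x y, e x y -> f x = f y \/ e (f x) (f y).

From mathcomp Require Import all_boot all_order all_algebra all_fingroup.
From mathcomp Require Import zify ring lra.
Set Implicit Arguments. Unset Strict Implicit. Unset Printing Implicit Defensive.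
Import GRing.Theory Num.Theory.
Local Open Scope ring_scope.

(* We argue by contraposition: if no simplex S satisfies f(S) = S, then
   L(f) = 0.  The proof is the Hopf trace formula.
   - Linear algebra.  For a chain endomorphism F of the middle term of
     C'' --Din--> C --Dout--> C' (with Din Dout = 0), \tr F splits as the
     trace on homology plus the traces of F on the boundaries im Din and of
     F' on im Dout ([hopf_trace]).  Ordered simplices [ochain] are alternating in their
     vertices; from this we get that the boundary matrices form a chain
     complex ([bd_bd]), that the simplicial map is a chain map
     ([chain_map]), and that its trace vanishes when no simplex is mapped
     onto itself ([tr_chmx_eq0]).
   - The alternating sum of the homology traces then telescopes to the
     boundary trace in a degree above dim X, which is zero. *)

(* Over the rationals (characteristic zero) v = - v forces v = 0; this is
   how alternating functions are shown to vanish on repeated vertices. *)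
Lemma row_eq_opp0 n (v : 'rV[rat]_n) : v = - v -> v = 0.
Proof. by move=> H; apply/rowP => j; move/rowP/(_ j): H; rewrite !mxE => H; lra. Qed.

Section RowProjections.
Variable K : fieldType.

Definition rproj m n (A : 'M[K]_(m, n)) : 'M[K]_n := pinvmx A *m A.

(* The trace of F on the row space of A (meaningful when it is F-invariant). *)
Definition imtrace m n (A : 'M[K]_(m, n)) (F : 'M[K]_n) : K := \tr (rproj A *m F).

Lemma rproj_sub m n (A : 'M[K]_(m, n)) : (rproj A <= A)%MS.
Proof. exact: submxMl. Qed.

Lemma rprojK m n (A : 'M[K]_(m, n)) : A *m rproj A = A.
Proof. by rewrite mulmxA mulmxKpV. Qed.

Lemma fix_submx k r n (X : 'M[K]_(k, n)) (U : 'M[K]_(r, n)) (P : 'M_n) :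
  U *m P = U -> (X <= U)%MS -> X *m P = X.
Proof. by move=> HU /submxP[Y ->]; rewrite -mulmxA HU. Qed.

Lemma imtraceE r n (U : 'M[K]_(r, n)) (P F : 'M[K]_n) :
  (P <= U)%MS -> U *m P = U -> (U *m F <= U)%MS -> \tr (P *m F) = imtrace U F.
Proof.
move=> sPU UP sUF; rewrite /imtrace.
have sQF : (rproj U *m F <= U)%MS.
  exact: submx_trans (submxMr _ (rproj_sub U)) sUF.
rewrite -(fix_submx UP sQF) [RHS]mxtrace_mulC mulmxA.
by rewrite (fix_submx (rprojK U) sPU).
Qed.

End RowProjections.

Section HopfTrace.
Variables (n m p : nat) (Dout : 'M[rat]_(n, m)) (Din : 'M[rat]_(p, n)).
Variables (F : 'M[rat]_n) (F' : 'M[rat]_m) (F'' : 'M[rat]_p).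
Hypothesis DinDout : Din *m Dout = 0.
Hypothesis FDout : F *m Dout = Dout *m F'.
Hypothesis FDin : F'' *m Din = Din *m F.

Let Z := kermx Dout.
Let PZ := rproj Z.

Lemma PZ_Dout : PZ *m Dout = 0.
Proof. by rewrite -mulmxA mulmx_ker mulmx0. Qed.

Lemma cycles_invariant : (Z *m F <= Z)%MS.
Proof. by apply/sub_kermxP; rewrite -mulmxA FDout mulmxA mulmx_ker mul0mx. Qed.

Lemma trace_off_cycles : \tr ((1%:M - PZ) *m F) = imtrace Dout F'.
Proof.
rewrite /imtrace /rproj; set pD := pinvmx Dout.
rewrite -(mulmxA pD) -FDout mulmxA [RHS]mxtrace_mulC mulmxA.
set R := Dout *m pD; set X := R - 1%:M + PZ.
have sXZ : (X <= Z)%MS.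
  apply/sub_kermxP; rewrite !mulmxDl mulNmx mul1mx PZ_Dout addr0.
  by rewrite /R /pD mulmxKpV // subrr.
have PZX : PZ *m X = 0.
  rewrite !mulmxDr mulmxN mulmx1 (fix_submx (rprojK Z) (rproj_sub Z)).
  by rewrite mulmxA PZ_Dout mul0mx sub0r addNr.
have trX : \tr (X *m F) = 0.
  have sXF : (X *m F <= Z)%MS.
    exact: submx_trans (submxMr _ sXZ) cycles_invariant.
  rewrite -(fix_submx (rprojK Z) sXF) mxtrace_mulC !mulmxA.
  by rewrite PZX !mul0mx mxtrace0.
apply/eqP; rewrite -subr_eq0 -raddfB /= -mulmxBl.
have -> : 1%:M - PZ - R = - X by rewrite /X !opprD opprK addrC addrA.
by rewrite mulNmx raddfN /= trX oppr0.
Qed.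

(* On the cycles Z = W (+) B, with B = im Din and W a complement, F
   contributes the homology trace plus its trace on the boundaries. *)
Lemma trace_on_cycles : \tr (PZ *m F) = homtr Dout Din F + imtrace Din F.
Proof.
set B := (<<Din>>)%MS; set W := (Z :\: B)%MS.
set PiW := proj_mx W B; set PiB := proj_mx B W.
have dxBW : (B :&: W = 0)%MS by rewrite capmxC capmx_diff.
have sBZ : (B <= Z)%MS by rewrite genmxE; apply/sub_kermxP.
have sWZ : (W <= Z)%MS by apply: diffmxSl.
have sZWB : (Z <= W + B)%MS.
  by rewrite -{1}(addsmx_diff_cap_eq Z B) addsmxS // capmxSr.
have sPiB : (PiB <= B)%MS by rewrite -[PiB]mul1mx proj_mx_sub.
have sPiW : (PiW <= W)%MS by rewrite -[PiW]mul1mx proj_mx_sub.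
have splitZ : \tr (PZ *m F) = \tr (PiW *m F) + \tr (PiB *m F).
  have sPZF : (PZ *m F <= W + B)%MS.
    apply: submx_trans sZWB.
    exact: submx_trans (submxMr _ (rproj_sub Z)) cycles_invariant.
  rewrite -[PZ *m F](add_proj_mx (capmx_diff Z B) sPZF) raddfD /=.
  rewrite (mxtrace_mulC (PZ *m F) PiW) (mxtrace_mulC (PZ *m F) PiB).
  rewrite (mulmxA PiW) (mulmxA PiB) (fix_submx (rprojK Z) (submx_trans sPiW sWZ)).
  by rewrite (fix_submx (rprojK Z) (submx_trans sPiB sBZ)).
have trB : \tr (PiB *m F) = imtrace Din F.
  apply: imtraceE; first by apply: submx_trans sPiB _; rewrite genmxE.
    by apply: proj_mx_id dxBW _; rewrite genmxE.
  by rewrite -FDin submxMl.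
have trW : homtr Dout Din F = \tr (PiW *m F).
  rewrite /homtr -/Z -/B -/W -/PiW.
  set Wb := row_base W; set pW := pinvmx Wb.
  have WQ : W *m (pW *m Wb) = W by rewrite mulmxA mulmxKpV // eq_row_base.
  clearbody pW Wb PiW.
  rewrite (mxtrace_mulC (Wb *m F *m PiW) pW) !mulmxA.
  rewrite (mxtrace_mulC (pW *m Wb *m F) PiW) !mulmxA.
  by rewrite -(mulmxA PiW) (fix_submx WQ sPiW).
by rewrite splitZ trB trW.
Qed.

Lemma hopf_trace : \tr F = homtr Dout Din F + imtrace Din F + imtrace Dout F'.
Proof.
have splitF : F = PZ *m F + (1%:M - PZ) *m F.
  by rewrite mulmxBl mul1mx addrC subrK.
by rewrite {1}splitF raddfD /= trace_on_cycles trace_off_cycles.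
Qed.

End HopfTrace.

Lemma lift_perm_decomp n (s : 'S_n.+1) (i : 'I_n.+1) :
  exists pi : 'S_n, s = lift_perm i (s i) pi.
Proof.
pose rest i' (s' : 'S_n.+1) k := odflt k (unlift (s' i') (s' (lift i' k))).
have restK i' (s' : 'S_n.+1) k : lift (s' i') (rest i' s' k) = s' (lift i' k).
  rewrite /rest; have := neq_lift i' k.
  by rewrite -(can_eq (permK s')) => /unlift_some[] ? ? ->.
have rest_inj i' (s' : 'S_n.+1) : injective (rest i' s').
  apply: can_inj (rest (s' i') (s'^-1)%g) _ => k.
  by rewrite {1}/rest restK !permK liftK.
exists (perm (rest_inj i s)); apply/permP => x.
case: (unliftP i x) => [x'|] ->; last by rewrite lift_perm_id.
by rewrite lift_perm_lift permE restK.
Qed.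

Lemma sign_lift_perm (R : comPzRingType) (k j : nat) (b : bool) :
  (-1) ^+ k * (-1) ^+ b = (-1) ^+ (odd k (+) odd j (+) b) * (-1) ^+ j :> R.
Proof.
rewrite !signr_addb !signr_odd -!mulrA; congr (_ * _).
by rewrite mulrCA -expr2 sqrr_sign mulr1.
Qed.

Section SimplicialChains.
Variables (T : finType) (e : rel T) (x0 : T).

Lemma simp_mem q (i : 'I_(nq e q)) : simp i \in qsimp e q.
Proof. exact: enum_valP. Qed.

Lemma simp_card q (i : 'I_(nq e q)) : #|simp i| = q.+1.
Proof. by move: (simp_mem i); rewrite inE => /andP[_ /eqP]. Qed.

Lemma size_enum_simp q (i : 'I_(nq e q)) : size (enum (simp i)) = q.+1.
Proof. by rewrite -cardE simp_card. Qed.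

Lemma simp_adj q (i : 'I_(nq e q)) x y :
  x \in simp i -> y \in simp i -> x != y -> e x y.
Proof.
move: (simp_mem i); rewrite inE => /andP[/andP[_ /forall_inP adj] _] hx hy.
by move: (adj x hx) => /forall_inP/(_ y hy)/implyP.
Qed.

Lemma can_simp_inj q (i : 'I_(nq e q)) : injective (can x0 i).
Proof.
move=> a b /eqP; rewrite /can nth_uniq ?size_enum_simp ?enum_uniq //.
by move/eqP/val_inj.
Qed.

Lemma can_mem q (i : 'I_(nq e q)) k : can x0 i k \in simp i.
Proof. by rewrite /can -mem_enum mem_nth // size_enum_simp. Qed.

Lemma can_surj q (i : 'I_(nq e q)) x : x \in simp i -> exists k, can x0 i k = x.
Proof.
move=> hx; have hl : (index x (enum (simp i)) < q.+1)%N.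
  by rewrite -(size_enum_simp i) index_mem mem_enum.
by exists (Ordinal hl); rewrite /can /= nth_index // mem_enum.
Qed.

Lemma can_clique q (i : 'I_(nq e q)) n (g : 'I_n -> 'I_q.+1) a b :
  can x0 i (g a) != can x0 i (g b) -> e (can x0 i (g a)) (can x0 i (g b)).
Proof. by apply: simp_adj; apply: can_mem. Qed.

Lemma ochainE q (t : 'I_q.+1 -> T) i : ochain e t 0 i =
  \sum_(r : 'S_q.+1 | [forall k, t k == can x0 i (r k)]) (-1) ^+ odd_perm r.
Proof.
rewrite mxE; apply: eq_bigl => r; apply: eq_forallb => k.
by rewrite /can (set_nth_default x0) // size_enum_simp.
Qed.

Lemma ochain_ext q (t t' : 'I_q.+1 -> T) : t =1 t' -> ochain e t = ochain e t'.
Proof.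
move=> tt'; apply/rowP => i; rewrite !mxE; apply: eq_bigl => r.
by apply: eq_forallb => k; rewrite tt'.
Qed.

Lemma ochain_perm q (t : 'I_q.+1 -> T) (s : 'S_q.+1) :
  ochain e (fun k => t (s k)) = (-1) ^+ odd_perm s *: ochain e t.
Proof.
apply/rowP => i; rewrite [in RHS]mxE !ochainE big_distrr /=.
rewrite (reindex_inj (mulgI s)) /=; apply: eq_big => r.
  apply/forallP/forallP => H k; last by rewrite permM; apply: H.
  by move: (H ((s^-1)%g k)); rewrite permM permKV.
by rewrite odd_permM signr_addb.
Qed.

Lemma alternating_repeat q m (Phi : ('I_q.+1 -> T) -> 'rV[rat]_m) :
  (forall t t', t =1 t' -> Phi t = Phi t') ->
  (forall t (s : 'S_q.+1), Phi (fun k => t (s k)) = (-1) ^+ odd_perm s *: Phi t) ->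
  forall t a b, a != b -> t a = t b -> Phi t = 0.
Proof.
move=> Hext Hperm t a b ab tab; apply: row_eq_opp0.
rewrite -{1}(@Hext (fun k => t (tperm a b k)) t).
  by rewrite Hperm odd_tperm ab expr1 scaleN1r.
by move=> k; case: tpermP => // ->.
Qed.

Lemma ochain_repeat q (t : 'I_q.+1 -> T) a b : a != b -> t a = t b ->
  ochain e t = 0.
Proof.
exact: (@alternating_repeat q _ (@ochain _ e q) (@ochain_ext q) (@ochain_perm q) t).
Qed.

Lemma ochain_can q (i : 'I_(nq e q)) : ochain e (can x0 i) = delta_mx 0 i.
Proof.
apply/rowP => j; rewrite ochainE mxE eqxx /=.
case: (eqVneq j i) => [->|ji].
  rewrite (big_pred1 (1%g : 'S_q.+1)) ?odd_perm1 ?expr0 ?eqxx // => r /=.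
  apply/forallP/eqP => [H | ->]; last by move=> k; rewrite perm1.
  by apply/permP => k; rewrite perm1; apply: can_simp_inj; apply/esym/eqP/H.
rewrite big_pred0 // => r; apply/negP => /forallP H.
have sij : simp i \subset simp j.
  by apply/subsetP => x /can_surj [k <-]; rewrite (eqP (H k)) can_mem.
have : simp i == simp j by rewrite eqEcard sij !simp_card /=.
by move/eqP/enum_val_inj => ij; rewrite ij eqxx in ji.
Qed.

Lemma ochain_rep q (t : 'I_q.+1 -> T) : injective t ->
  (forall a b, a != b -> e (t a) (t b)) ->
  exists j : 'I_(nq e q), exists rho : 'S_q.+1, forall k, t k = can x0 j (rho k).
Proof.
move=> tinj tadj; set S := t @: [set: 'I_q.+1].
have HS : S \in qsimp e q.
  rewrite inE /simplex card_imset // cardsT card_ord eqxx andbT.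
  apply/andP; split.
    by apply/set0Pn; exists (t ord0); apply: imset_f; rewrite inE.
  apply/forall_inP => _ /imsetP [a _ ->]; apply/forall_inP => _ /imsetP [b _ ->].
  by apply/implyP => hab; apply: tadj; apply: contraNneq hab => ->.
set j := enum_rank_in HS S.
have sj : simp j = S by rewrite /simp /j enum_rankK_in.
have ilt k : (index (t k) (enum (simp j)) < q.+1)%N.
  by rewrite -(size_enum_simp j) index_mem mem_enum sj imset_f ?inE.
pose rf k : 'I_q.+1 := inord (index (t k) (enum (simp j))).
have rfE k : can x0 j (rf k) = t k.
  by rewrite /can /rf inordK ?ilt // nth_index // mem_enum sj imset_f ?inE.
have rinj : injective rf by move=> a b hab; apply: tinj; rewrite -rfE hab rfE.
by exists j, (perm rinj) => k; rewrite permE rfE.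
Qed.

Lemma ochain_mul q m (M : 'M[rat]_(nq e q, m)) (Phi : ('I_q.+1 -> T) -> 'rV[rat]_m) :
  (forall j, row j M = Phi (can x0 j)) ->
  (forall t t', t =1 t' -> Phi t = Phi t') ->
  (forall t (s : 'S_q.+1), Phi (fun k => t (s k)) = (-1) ^+ odd_perm s *: Phi t) ->
  forall t, (forall a b, t a != t b -> e (t a) (t b)) -> ochain e t *m M = Phi t.
Proof.
move=> HM Hext Hperm t tadj.
case: (boolP [exists a, exists b, (a != b) && (t a == t b)]).
  move=> /existsP [a /existsP [b /andP [ab /eqP tab]]].
  by rewrite (ochain_repeat ab tab) (alternating_repeat Hext Hperm ab tab) mul0mx.
move=> /existsPn Hn.
have tinj : injective t.
  move=> a b tab; apply/eqP; move: (Hn a) => /existsPn/(_ b).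
  by rewrite tab eqxx andbT negbK.
have tadj' a b : a != b -> e (t a) (t b).
  by move=> ab; apply: tadj; rewrite (inj_eq tinj).
have [j [rho Hr]] := ochain_rep tinj tadj'.
rewrite (ochain_ext Hr) ochain_perm ochain_can -scalemxAl -rowE HM.
by rewrite (Hext _ _ Hr) Hperm.
Qed.


Definition obd q (t : 'I_q.+2 -> T) : 'rV[rat]_(nq e q) :=
  \sum_(k < q.+2) (-1) ^+ k *: ochain e (fun j => t (lift k j)).

Lemma obd_ext q (t t' : 'I_q.+2 -> T) : t =1 t' -> obd t = obd t'.
Proof.
by move=> tt'; apply: eq_bigr => k _; congr (_ *: _); apply: ochain_ext => j; rewrite tt'.
Qed.

(* The boundary of an ordered simplex is alternating as well: the face
   opposite to vertex k of t o s is the face opposite to s(k) of t,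
   reordered by the permutation of the remaining vertices. *)
Lemma obd_perm q (t : 'I_q.+2 -> T) (s : 'S_q.+2) :
  obd (fun k => t (s k)) = (-1) ^+ odd_perm s *: obd t.
Proof.
rewrite /obd scaler_sumr [RHS](reindex_inj (@perm_inj _ s)) /=.
apply: eq_bigr => k _; have [pi sE] := lift_perm_decomp s k.
rewrite (@ochain_ext _ _ (fun j => (fun y => t (lift (s k) y)) (pi j))); last first.
  by move=> j; rewrite /= {1}sE lift_perm_lift.
rewrite (ochain_perm (fun y => t (lift (s k) y)) pi) !scalerA; congr (_ *: _).
have -> : odd_perm s = odd k (+) odd (s k) (+) odd_perm pi.
  by rewrite {1}sE odd_lift_perm.
exact: sign_lift_perm.
Qed.

(* Row i of [bd] is the boundary of the i-th basis simplex, so [bd] maps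
   every ordered simplex to its boundary. *)
Lemma bd_mul q (t : 'I_q.+2 -> T) : (forall a b, t a != t b -> e (t a) (t b)) ->
  ochain e t *m bd e x0 q = obd t.
Proof.
apply: ochain_mul; first by move=> j; rewrite rowK.
  exact: obd_ext.
exact: obd_perm.
Qed.

Lemma chmx_mul q (f : T -> T) (t : 'I_q.+1 -> T) :
  (forall a b, t a != t b -> e (t a) (t b)) ->
  ochain e t *m chmx e x0 f q = ochain e (fun k => f (t k)).
Proof.
apply: (@ochain_mul _ _ _ (fun t => ochain e (fun k => f (t k)))).
- by move=> j; rewrite rowK.
- by move=> t1 t2 tt'; apply: ochain_ext => k; rewrite tt'.
- by move=> t1 s; exact: (ochain_perm (fun k => f (t1 k)) s).
Qed.

(* The involution on pairs (k, l) of face indices exchanging the two ways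
   lift k o lift l = lift k' o lift l' of deleting the same two vertices. *)
Definition face_swap q (p : 'I_q.+3 * 'I_q.+2) : 'I_q.+3 * 'I_q.+2 :=
  if (p.2 < p.1)%N then (inord p.2, inord p.1.-1) else (inord p.2.+1, inord p.1).

Lemma face_swap1 q (p : 'I_q.+3 * 'I_q.+2) :
  ((face_swap p).1 : nat) = if (p.2 < p.1)%N then p.2 : nat else (p.2).+1.
Proof.
move: (ltn_ord p.1) (ltn_ord p.2) => h1 h2.
by rewrite /face_swap; case: ifP => h /=; rewrite inordK //; lia.
Qed.

Lemma face_swap2 q (p : 'I_q.+3 * 'I_q.+2) :
  ((face_swap p).2 : nat) = if (p.2 < p.1)%N then (p.1 : nat).-1 else p.1.
Proof.
move: (ltn_ord p.1) (ltn_ord p.2) => h1 h2.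
by rewrite /face_swap; case: ifP => h /=; rewrite inordK //; lia.
Qed.

Lemma face_swapK q : involutive (@face_swap q).
Proof.
move=> [k l]; rewrite [LHS]surjective_pairing.
congr (_, _); apply: ord_inj; rewrite ?face_swap1 ?face_swap2 ?face_swap1 /=;
  by case: (ltnP l k) => h /=; do ![case: leqP => ? /=]; lia.
Qed.

Lemma face_swap_sign q (p : 'I_q.+3 * 'I_q.+2) :
  (-1) ^+ (face_swap p).1 * (-1) ^+ (face_swap p).2 = - ((-1) ^+ p.1 * (-1) ^+ p.2) :> rat.
Proof.
have oddE : odd ((face_swap p).1 + (face_swap p).2) = ~~ odd (p.1 + p.2).
  rewrite face_swap1 face_swap2; case: ifP => h; first last.
    by rewrite addSn /= addnC.
  by move: h; case: (nat_of_ord p.1) => // k _; rewrite addSn /= negbK addnC.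
by rewrite -!exprD -signr_odd oddE signrN signr_odd.
Qed.

Lemma face_swap_lift q (p : 'I_q.+3 * 'I_q.+2) (j : 'I_q.+1) :
  lift (face_swap p).1 (lift (face_swap p).2 j) = lift p.1 (lift p.2 j).
Proof.
apply: val_inj; rewrite /= face_swap1 face_swap2 /bump.
by case: ltnP => h; do ![case: leqP => ? /=]; lia.
Qed.

(* d o d = 0: the terms of the double sum cancel in pairs under face_swap. *)
Lemma bd_bd q : bd e x0 q.+1 *m bd e x0 q = 0.
Proof.
apply/row_matrixP => i; rewrite row_mul row0 rowK mulmx_suml.
transitivity (\sum_(k < q.+3) (-1) ^+ k *: obd (fun j => can x0 i (lift k j))).
  apply: eq_bigr => k _; rewrite -scalemxAl bd_mul //.
  by move=> a b; exact: (@can_clique _ i _ (fun x : 'I_q.+2 => lift k x) a b).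
rewrite /obd; under eq_bigr => k _ do rewrite scaler_sumr.
rewrite pair_big /=; apply: row_eq_opp0.
rewrite {1}(reindex_inj (can_inj (@face_swapK q))) -sumrN.
apply: eq_bigr => p _; rewrite !scalerA -scaleNr -face_swap_sign.
by congr (_ *: _); apply: ochain_ext => j /=; rewrite face_swap_lift.
Qed.

Lemma chain_map q (f : T -> T) : dcontinuous e f ->
  chmx e x0 f q.+1 *m bd e x0 q = bd e x0 q *m chmx e x0 f q.
Proof.
move=> f_cont; apply/row_matrixP => i.
rewrite !row_mul !rowK mulmx_suml bd_mul; last first.
  move=> a b fab; have ab : can x0 i a != can x0 i b by apply: contraNneq fab => ->.
  have [h|//] := f_cont _ _ (@can_clique _ i _ id a b ab).
  by rewrite h eqxx in fab.
apply: eq_bigr => k _; rewrite -scalemxAl chmx_mul //.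
by move=> a b; exact: (@can_clique _ i _ (fun x : 'I_q.+1 => lift k x) a b).
Qed.

(* The diagonal entry of the chain map at a basis simplex S is nonzero only
   if f maps S onto itself; so without invariant simplices the trace is 0. *)
Lemma tr_chmx_eq0 q (f : T -> T) :
  (forall S, simplex e S -> f @: S != S) -> \tr (chmx e x0 f q) = 0.
Proof.
move=> nofix; rewrite /mxtrace big1 // => i _.
rewrite mxE ochainE big_pred0 // => r; apply/negP => /forallP H.
have HS : simplex e (simp i) by move: (simp_mem i); rewrite inE => /andP[].
move: (nofix _ HS) => /negP; apply; rewrite eqEsubset; apply/andP; split.
  apply/subsetP => y /imsetP [x /can_surj [k <-] ->].
  by rewrite (eqP (H k)) can_mem.
apply/subsetP => y /can_surj [m <-].
have -> : can x0 i m = f (can x0 i ((r^-1)%g m)) by rewrite (eqP (H _)) permKV.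
by apply: imset_f; apply: can_mem.
Qed.

End SimplicialChains.

Lemma telescope_sign (R : comPzRingType) (a : nat -> R) N :
  \sum_(q < N.+1) (-1) ^+ q * (- a q - (if (q : nat) is q'.+1 then a q' else 0))
  = - ((-1) ^+ N * a N).
Proof.
elim: N => [|N IH]; first by rewrite big_ord1 /= !expr0 !mul1r subr0.
by rewrite big_ord_recr /= IH exprS; ring.
Qed.

Lemma nq_eq0 (T : finType) (e : rel T) q : (#|T| <= q)%N -> nq e q = 0%N.
Proof.
move=> Tq; apply/eqP; rewrite cards_eq0; apply/eqP/setP => S; rewrite !inE.
by rewrite (ltn_eqF (leq_ltn_trans (max_card _) (leq_ltn_trans Tq (ltnSn _)))) andbF.
Qed.

Section NoInvariantSimplex.
Variables (T : finType) (e : rel T) (x0 : T) (f : T -> T).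
Hypothesis f_cont : dcontinuous e f.
Hypothesis nofix : forall S, simplex e S -> f @: S != S.

Let bdtrace q := imtrace (bd e x0 q) (chmx e x0 f q).

(* Hopf: since \tr f_q = 0, tr(f_{*,q}) = - bdtrace q - bdtrace (q-1). *)
Lemma htrace_no_fix q :
  htrace e x0 f q = - bdtrace q - (if q is q'.+1 then bdtrace q' else 0).
Proof.
case: q => [|q] /=.
  have := @hopf_trace _ _ _ (0 : 'M[rat]_(nq e 0, 0)) (bd e x0 0) (chmx e x0 f 0)
    0 (chmx e x0 f 1) (mulmx0 _ _) _ (chain_map x0 0 f_cont).
  rewrite mulmx0 mul0mx (tr_chmx_eq0 x0 0 nofix) => /(_ erefl).
  have -> : imtrace (0 : 'M[rat]_(nq e 0, 0)) 0 = 0 by rewrite /imtrace /mxtrace big_ord0.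
  by rewrite /bdtrace => ?; lra.
have := hopf_trace (bd_bd e x0 q) (chain_map x0 q f_cont) (chain_map x0 q.+1 f_cont).
by rewrite (tr_chmx_eq0 x0 q.+1 nofix) /bdtrace => ?; lra.
Qed.

End NoInvariantSimplex.

(* Without invariant simplices the Lefschetz number vanishes: the sum
   telescopes to the boundary trace in degree #|T|, where C_q = 0. *)
Lemma lefschetz_no_fix (T : finType) (e : rel T) (f : T -> T) :
  dcontinuous e f -> (forall S, simplex e S -> f @: S != S) -> lefschetz e f = 0.
Proof.
move=> f_cont nofix; rewrite /lefschetz; case: pickP => [x0 _|_] //.
under eq_bigr => q _ do rewrite (htrace_no_fix x0 f_cont nofix).
rewrite (telescope_sign (fun q => imtrace (bd e x0 q) (chmx e x0 f q))).
rewrite /imtrace /mxtrace big1 ?mulr0 ?oppr0 // => i.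
by have := ltn_ord i; rewrite {2}(nq_eq0 e (leqnn _)).
Qed.

Theorem theorem3p3 (T : finType) (e : rel T)
  (e_sym : symmetric e) (e_irr : irreflexive e)
  (f : T -> T) (f_cont : dcontinuous e f) :
  lefschetz e f != 0 ->
  exists S : {set T}, simplex e S /\ f @: S = S.
Proof.
move=> L_neq0.
have [/existsP [S /andP [HS /eqP fS]] | /existsPn nofix] :=
  boolP [exists S, simplex e S && (f @: S == S)]; first by exists S.
move: L_neq0; rewrite lefschetz_no_fix ?eqxx // => S HS.
by move: (nofix S); rewrite HS.
Qed.
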